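(* For every $R>0$ and every integer $\ell\ge1$, $\widehat W_R(\ell)\le\widehat W_R(1)$, where $\widehat W_R(\ell)=\frac{2}{\pi\ell^3}(\ell R-\sin(\ell R))$.
   Context: For $R\in[0,\pi]$, $\widehat W_R(\ell)$ is the $\ell$-th Fourier coefficient $\int_{\mathbb T}W_R(\theta)e^{-2\pi i\ell\theta}d\theta$ of the Hegselmann--Krause interaction $W_R(\theta)=(R-2\pi|\theta|)_+^2$ on $\mathbb T=[-\frac12,\frac12)$; the claim concerns the explicit formula given. *)

From Stdlib Require Export Reals.
Open Scope R_scope.

(* Explicit formula for the l-th Fourier coefficient of the
   Hegselmann--Krause interaction W_R(theta) = (R - 2 pi |theta|)_+^2:
   What R l = 2/(pi l^3) * (l R - sin(l R)). *)
Definition What (r : R) (l : nat) : R :=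
  2 / (PI * (INR l) ^ 3) * (INR l * r - sin (INR l * r)).

(* With [phi x = (x - sin x) / x^3] (sin_defect_ratio below) we have
   [What r l = 2 r^3 / PI * phi (l r)], so it suffices that [phi] is nonincreasing on
   [(0, +oo)].  Since [phi' x = (3 sin x - 2 x - x cos x) / x^4], this reduces to
   [3 sin x <= x (2 + cos x)] for [x >= 0].  On [[0, PI]] the function
   [3 sin x - x (2 + cos x)] and its first two derivatives vanish at 0 while its third
   derivative is [- x sin x <= 0], so three monotonicity steps give the bound; for
   [x > PI > 3] it is trivial as [3 sin x <= 3 < x <= x (2 + cos x)]. *)
From Stdlib Require Import Reals Lra Lia.
From Coquelicot Require Import Coquelicot.
Open Scope R_scope.

Lemma derive_nonpos_le (f df : R -> R) (a b : R) :
  a <= b ->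
  (forall x, a <= x <= b -> is_derive f x (df x)) ->
  (forall x, a <= x <= b -> df x <= 0) ->
  f b <= f a.
Proof.
  intros Hab Hder Hneg.
  destruct (MVT_gen f a b df) as [c [Hc Hmvt]];
    rewrite ?Rmin_left, ?Rmax_right in * by lra.
  - intros x Hx. apply Hder. lra.
  - intros x Hx. apply derivable_continuous_pt. exists (df x).
    apply is_derive_Reals, Hder. lra.
  - assert (df c * (b - a) <= 0) by (apply Rmult_le_0_r; [apply Hneg|]; lra).
    lra.
Qed.

Lemma PI_gt_3 : 3 < PI.
Proof. pose proof PI2_3_2. lra. Qed.

Lemma x_cos_le_sin x : 0 <= x <= PI -> x * cos x <= sin x.
Proof.
  intros Hx.
  enough (x * cos x - sin x <= 0 * cos 0 - sin 0) by (rewrite cos_0, sin_0 in *; lra).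
  apply (derive_nonpos_le (fun t => t * cos t - sin t) (fun t => - (t * sin t)));
    [lra | |].
  - intros t _. auto_derive; auto. ring.
  - intros t Ht. pose proof (sin_ge_0 t ltac:(lra) ltac:(lra)).
    assert (0 <= t * sin t) by (apply Rmult_le_pos; lra). lra.
Qed.

Lemma x_sin_add_2cos_le_2 x : 0 <= x <= PI -> x * sin x + 2 * cos x <= 2.
Proof.
  intros Hx.
  enough (x * sin x + 2 * cos x - 2 <= 0 * sin 0 + 2 * cos 0 - 2)
    by (rewrite cos_0, sin_0 in *; lra).
  apply (derive_nonpos_le (fun t => t * sin t + 2 * cos t - 2)
    (fun t => t * cos t - sin t)); [lra | |].
  - intros t _. auto_derive; auto. ring.
  - intros t Ht. pose proof (x_cos_le_sin t ltac:(lra)). lra.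
Qed.

Lemma three_sin_le x : 0 <= x -> 3 * sin x <= x * (2 + cos x).
Proof.
  intros Hx. pose proof PI_gt_3.
  destruct (Rle_lt_dec x PI) as [HxPI | HxPI].
  - enough (3 * sin x - x * (2 + cos x) <= 3 * sin 0 - 0 * (2 + cos 0)) by
      (rewrite cos_0, sin_0 in *; lra).
    apply (derive_nonpos_le (fun t => 3 * sin t - t * (2 + cos t))
      (fun t => t * sin t + 2 * cos t - 2)); [lra | |].
    + intros t _. auto_derive; auto. ring.
    + intros t Ht. pose proof (x_sin_add_2cos_le_2 t ltac:(lra)). lra.
  - pose proof (SIN_bound x). pose proof (COS_bound x). nra.
Qed.

Definition sin_defect_ratio (x : R) : R := (x - sin x) / x ^ 3.

Lemma sin_defect_ratio_antitone a b :
  0 < a <= b -> sin_defect_ratio b <= sin_defect_ratio a.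
Proof.
  intros Hab.
  apply (derive_nonpos_le sin_defect_ratio
    (fun t => (3 * sin t - t * (2 + cos t)) / t ^ 4)); [lra | |].
  - intros t Ht. assert (t <> 0) by lra. unfold sin_defect_ratio.
    auto_derive.
    + repeat split; auto. change (t * (t * (t * 1))) with (t ^ 3).
      apply pow_nonzero. lra.
    + field. auto.
  - intros t Ht. pose proof (three_sin_le t ltac:(lra)).
    assert (0 < t ^ 4) by (apply pow_lt; lra).
    unfold Rdiv. apply Rmult_le_0_r; [lra |].
    left. apply Rinv_0_lt_compat. lra.
Qed.

Lemma What_eq_sin_defect_ratio r l :
  r <> 0 -> (0 < l)%nat ->
  What r l = 2 * r ^ 3 / PI * sin_defect_ratio (INR l * r).
Proof.
  intros Hr Hl. apply lt_0_INR in Hl.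
  unfold What, sin_defect_ratio. pose proof PI_neq0.
  field. repeat split; lra.
Qed.

Theorem lemma3p3 : forall (r : R) (l : nat),
  0 < r -> (1 <= l)%nat -> What r l <= What r 1.
Proof.
  intros r l Hr Hl.
  assert (Hl_ge1 : 1 <= INR l) by (apply (le_INR 1); auto).
  rewrite !What_eq_sin_defect_ratio by (lra || lia).
  apply Rmult_le_compat_l.
  - pose proof (pow_lt r 3 Hr). pose proof PI_RGT_0.
    apply Rmult_le_pos; [lra |]. left. apply Rinv_0_lt_compat. lra.
  - apply sin_defect_ratio_antitone. simpl. nra.
Qed.
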